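(* Let $K$ be a compact line, $(F_i)_{i\in I}$ a weak*-null family in $\mathrm{NBV}(K)$ with $\mu_i$ the measure associated to $F_i$, $J$ a convex subset of $K$ and $S$ a finite subset of $J$. If $J$ has more than one point then $\sum_{t\in S}|F_i(t)|\le|\mu_i|(J)\mod c_0(I)$, and if $J$ is open then $\sum_{t\in S}|F_i(t)|\le\tfrac12|\mu_i|(J)\mod c_0(I)$.
   Context: A compact line is a totally ordered set which is compact in its order topology. $J\subseteq K$ is convex if $t\le s$ in $J$ implies $[t,s]\subseteq J$. $\mathrm{NBV}(K)$ is the space of right-continuous real maps of bounded variation on $K$; each finite signed regular Borel measure $\mu$ on $K$ corresponds isometrically to $F_\mu(t)=\mu([\min K,t])$, and the measure associated to $F$ is the $\mu$ with $F_\mu=F$; $|\mu|$ is its total variation measure. $c_0(I)$ is the set of real families with $\{i:|a_i|\ge\varepsilon\}$ finite for all $\varepsilon>0$ (written $\lim_{i\in I}a_i=0$). $(F_i)$ is weak*-null if $\lim_i\int_Kf\,d\mu_i=0$ for all $f\in C(K)$. ''$x_i\le y_i\mod c_0(I)$'' means $\{i:x_i\ge y_i+\varepsilon\}$ is finite for every $\varepsilon>0$. *)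

From HB Require Import structures.
From mathcomp Require Import all_boot all_order all_algebra.
From mathcomp Require Import all_classical all_reals all_analysis.
Set Implicit Arguments. Unset Strict Implicit. Unset Printing Implicit Defensive.
Import Order.TTheory GRing.Theory Num.Theory.
Import numFieldNormedType.Exports.
Local Open Scope classical_set_scope.
Local Open Scope ring_scope.

Section borel_space.
Context {d : Order.disp_t} (K : orderTopologicalType d) (k0 : K).
Definition borelK_pt (k : K) : Type := K.
HB.instance Definition _ := Choice.on (borelK_pt k0).
HB.instance Definition _ := isPointed.Build (borelK_pt k0) k0.
Definition borelK (k : K) := g_sigma_algebraType (@open K : set (set (borelK_pt k))).
End borel_space.

Definition compact_line {d : Order.disp_t} (K : orderTopologicalType d) :=
  compact (@setT K).

Section defs.
Context {d : Order.disp_t} {K : orderTopologicalType d} {k0 : K} {R : realType}.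
Local Notation B := (borelK k0).


Definition convex_subset (J : set K) :=
  forall t s : K, J t -> J s -> (t <= s)%O -> `[t, s]%classic `<=` J.

Definition radon_regular (mu : {measure set B -> \bar R}) :=
  forall A : set B, measurable A ->
    mu A = ereal_sup [set mu C | C in [set C : set B | compact (C : set K) /\ C `<=` A]] /\
    mu A = ereal_inf [set mu U | U in [set U : set B | open (U : set K) /\ A `<=` U]].

Definition sm_val (mp mn : {finite_measure set B -> \bar R}) (A : set B) : R :=
  fine (mp A) - fine (mn A).

Definition tot_var (mp mn : {finite_measure set B -> \bar R}) (A : set B) : \bar R :=
  ereal_sup [set v : \bar R | exists (n : nat) (P : 'I_n -> set B),
                 (forall k, measurable (P k)) /\
                 (forall k l, k != l -> P k `&` P l = set0) /\
                 \bigcup_k P k = A /\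
                 v = (\sum_(k < n) `|sm_val mp mn (P k)|)%:E].

Definition sm_integral (mp mn : {finite_measure set B -> \bar R}) (f : K -> R) : R :=
  fine (\int[mp]_(x in [set: B]) (f x)%:E) - fine (\int[mn]_(x in [set: B]) (f x)%:E).

(** F_mu(t) = mu([min K, t]) ; note [min K, t] = ]-oo, t] *)
Definition F_of_meas (mp mn : {finite_measure set B -> \bar R}) (t : K) : R :=
  sm_val mp mn (`]-oo, t]%classic : set K).

Definition c0_lim0 {I : Type} (a : I -> R) :=
  forall eps : R, 0 < eps -> finite_set [set i | eps <= `|a i|].

Definition le_mod_c0I {I : Type} (x : I -> R) (y : I -> \bar R) :=
  forall eps : R, 0 < eps -> finite_set [set i | (y i + eps%:E <= (x i)%:E)%E].

End defs.

(* Write mu for the signed measure of F.  For t in S we look for a "piece": a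
   continuous f, a Borel set D next to t and a weight 0 <= h <= 1 with
   F(t) = mu(]-oo, t]) = int f dmu -+ int_D h dmu; Urysohn functions equal to 1
   left of t and 0 right of a nearby point provide them.  Then
   |F(t)| <= |int f dmu| + |int_D h dmu|.  When the sets D of the pieces are
   pairwise disjoint subsets of J, the second terms add up to at most |mu|(J)
   (approximate h by step functions on its level sets), while the first ones
   tend to 0 along a weak*-null family.  Disjointness is arranged by sorting S
   and cutting J between consecutive points.  If J has two points, one piece
   per point, on a side where J extends, suffices; if J is open, every point
   gets a piece on each side, whence the factor 1/2. *)

From HB Require Import structures.
From mathcomp Require Import all_boot all_order all_algebra.
From mathcomp Require Import all_classical all_reals all_analysis.
From mathcomp Require Import measurable_realfun.
From mathcomp Require Import ring lra zify.
Set Implicit Arguments. Unset Strict Implicit. Unset Printing Implicit Defensive.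
Import Order.TTheory GRing.Theory Num.Theory.
Import numFieldNormedType.Exports.
Local Open Scope classical_set_scope.
Local Open Scope ring_scope.

Lemma norm_sub_le_pinched (R : realFieldType) (c e P N x y : R) :
  0 <= c <= 1 -> 0 <= P -> 0 <= N ->
  c * P <= x <= c * P + e * P -> c * N <= y <= c * N + e * N ->
  `|x - y| <= `|P - N| + e * (P + N).
Proof.
move=> /andP[c0 c1] P0 N0 /andP[x1 x2] /andP[y1 y2].
have : `|c * P - c * N| <= `|P - N| by rewrite -mulrBr normrM ger0_norm// ler_piMl.
rewrite mulrDr !ler_norml => /andP[u1 u2].
move: u1 u2 x1 x2 y1 y2; set cP := c * P; set cN := c * N; set eP := e * P; set eN := e * N.
by move=> *; apply/andP; split; lra.
Qed.

Lemma norm_le_normD (R : numDomainType) (a b : R) : `|a| <= `|a + b| + `|b|.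
Proof. by rewrite -{1}(addrK b a) ler_normB. Qed.

Lemma big_option (R : nmodType) (T : finType) (F : option T -> R) :
  \sum_(o : option T) F o = F None + \sum_(x : T) F (Some x).
Proof.
rewrite (bigD1 None) //= (reindex_omap Some id) => [|[x|] //].
by congr (_ + _); apply: eq_bigl => x; rewrite eqxx.
Qed.

Lemma sum_pair_bool (R : numDomainType) (T : finType) (F : T -> R) :
  \sum_(p : T * bool) F p.1 = 2 * \sum_x F x.
Proof.
rewrite -(pair_bigA _ (fun x (_ : bool) => F x)) /= mulr_sumr.
by apply: eq_bigr => x _; rewrite big_bool mulr2n mulrDl mul1r.
Qed.

Section order_intervals.
Context {d : Order.disp_t} {K : orderType d}.

Lemma lray_disjoint (a : K) (D : set K) : (forall x, D x -> (a < x)%O) ->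
  `]-oo, a] `&` D = set0.
Proof.
move=> aD; apply/seteqP; split => // x [/=]; rewrite in_itv /= => xa /aD ax.
by have := le_lt_trans xa ax; rewrite ltxx.
Qed.

Lemma lray_split (u t : K) : (u <= t)%O -> `]-oo, t]%classic = `]-oo, u] `|` `]u, t].
Proof.
move=> ut; apply/seteqP; split => x /=; rewrite !in_itv /=.
  by move=> xt; have [xu|ux] := leP x u; [left|right]; rewrite /= ?in_itv /= ?xu ?ux ?xt.
case; rewrite /= ?in_itv /=; first by move=> xu; exact: le_trans ut.
by case/andP.
Qed.

End order_intervals.

Section measurable01.
Context d (T : measurableType d) (R : realType).

Definition measurable01 (h : T -> R) :=
  measurable_fun setT h /\ forall x, 0 <= h x <= 1.

Lemma measurable01_cst1 : measurable01 (fun=> 1).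
Proof. by split => // x; rewrite ler01 lexx. Qed.

Lemma measurable01C h : measurable01 h -> measurable01 (fun x => 1 - h x).
Proof.
move=> [mh h01]; split; first exact: measurable_funB.
by move=> x; case/andP: (h01 x) => h0 h1; rewrite subr_ge0 h1 gerBl.
Qed.

Variable mu : {finite_measure set T -> \bar R}.

Lemma measurable01_integrable D h : measurable D -> measurable01 h ->
  mu.-integrable D (EFin \o h).
Proof.
move=> mD [mh h01]; apply: measurable_bounded_integrable => //.
- by rewrite ltey_eq fin_num_measure.
- exact: measurable_funS mh.
- exists 1; split => // M M1 x _ /=.
  by case/andP: (h01 x) => h0 h1; rewrite ger0_norm// (le_trans h1)// ltW.
Qed.

Lemma Rintegral01_bounds D h a b : measurable D -> measurable01 h ->
  (forall x, D x -> a <= h x <= b) ->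
  a * fine (mu D) <= \int[mu]_(x in D) h x <= b * fine (mu D).
Proof.
move=> mD h01 hab; rewrite -!Rintegral_cst//.
have ih := measurable01_integrable mD h01.
have ia := finite_measure_integrable_cst mu a mD.
have ib := finite_measure_integrable_cst mu b mD.
by apply/andP; split; apply: le_Rintegral => // x /hab /andP[].
Qed.

Lemma Rintegral01C D h : measurable D -> measurable01 h ->
  \int[mu]_(x in D) (1 - h x) = fine (mu D) - \int[mu]_(x in D) h x.
Proof.
move=> mD h01; rewrite RintegralB ?Rintegral_cst ?mul1r//.
- exact: finite_measure_integrable_cst.
- exact: measurable01_integrable.
Qed.

Lemma Rintegral_one_on_zero_off A D f : measurable A -> measurable D ->
  A `&` D = set0 -> measurable01 f ->
  (forall x, A x -> f x = 1) -> (forall x, ~ (A `|` D) x -> f x = 0) ->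
  \int[mu]_x f x = fine (mu A) + \int[mu]_(x in D) f x.
Proof.
move=> mA mD AD f01 f1 f0.
have mAD : measurable (A `|` D) by exact: measurableU.
have int E : measurable E -> mu.-integrable E (EFin \o f).
  by move=> mE; exact: measurable01_integrable.
rewrite -(setUv (A `|` D)) Rintegral_setU//; last 3 first.
- exact: measurableC.
- by rewrite setUv; exact: int.
- by rewrite disj_set2E setICr.
rewrite Rintegral_setU//; last 2 first.
- exact: int.
- by rewrite disj_set2E AD.
rewrite (@eq_Rintegral _ _ _ mu A (fun=> 1)); last by move=> x /set_mem /f1.
rewrite [X in _ + X](@eq_Rintegral _ _ _ mu _ (fun=> 0)); last by move=> x /set_mem /f0.
by rewrite !Rintegral_cst ?mul1r ?mul0r ?addr0//; exact: measurableC.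
Qed.

Definition level_set (D : set T) (h : T -> R) (n k : nat) : set T :=
  D `&` h @^-1` `[k%:R / n%:R, k.+1%:R / n%:R[.

Lemma measurable_level_set D h n k : measurable D -> measurable01 h ->
  measurable (level_set D h n k).
Proof.
move=> mD [mh _]; apply: measurableI => //.
by rewrite -[X in measurable X]setTI; apply: mh => //; exact: measurable_itv.
Qed.

Lemma level_set_bounds D h n k x : level_set D h n k x ->
  k%:R / n%:R <= h x <= k.+1%:R / n%:R.
Proof. by case=> _ /=; rewrite in_itv /= => /andP[-> /ltW ->]. Qed.

Lemma level_set_truncn D h n k x : (0 < n)%N -> level_set D h n k x ->
  Num.truncn (h x * n%:R) = k.
Proof.
move=> n0 [_] /=; rewrite in_itv /= => /andP[h1 h2]; apply: truncn_def.
by rewrite -ler_pdivrMr ?ltr0n// -ltr_pdivlMr ?ltr0n// h1 h2.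
Qed.

Lemma level_set_trivIset D h n : (0 < n)%N ->
  trivIset setT (level_set D h n).
Proof.
move=> n0 k l _ _ [x [Ek El]].
by rewrite -(level_set_truncn n0 Ek) -(level_set_truncn n0 El).
Qed.

Lemma level_set_cover D h n : (0 < n)%N -> measurable01 h ->
  D = \big[setU/set0]_(k < n.+1) level_set D h n k.
Proof.
move=> n0 [_ h01]; apply/seteqP; split => [x Dx|x]; last first.
  by rewrite -bigcup_mkord => -[k _] [].
have /andP[hx0 hx1] := h01 x; have n0' : 0 < n%:R :> R by rewrite ltr0n.
have hn0 : 0 <= h x * n%:R by rewrite mulr_ge0// ltW.
apply: (@bigsetU_sup _ (Num.truncn (h x * n%:R))).
  by rewrite ltnS truncn_le_nat (le_lt_trans (ler_piMl _ hx1))// ?ltr_nat// ltW.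
split => //=; rewrite in_itv /=; have /andP[t1 t2] := truncn_itv hn0.
by rewrite ler_pdivrMr// ltr_pdivlMr// t1 t2.
Qed.

Lemma Rintegral_level_sets D h g n : (0 < n)%N -> measurable D ->
  measurable01 h -> measurable01 g ->
  \int[mu]_(x in D) g x = \sum_(k < n.+1) \int[mu]_(x in level_set D h n k) g x.
Proof.
move=> n0 mD h01 [mg g01].
have mE k := measurable_level_set n k mD h01.
rewrite {1}(level_set_cover D n0 h01) /Rintegral ge0_integral_bigsetU //.
- rewrite -sum_fine// => k _; apply: integrable_fin_num => //.
  exact: measurable01_integrable.
- exact: index_enum_uniq.
- by move=> i j _ _ /(level_set_trivIset n0 I I) ij; apply: val_inj.
- rewrite -(level_set_cover D n0 h01).
  by apply/measurable_EFinP; exact: measurable_funS mg.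
- by move=> x _; rewrite lee_fin; case/andP: (g01 x).
Qed.

Lemma fine_measure_level_sets D h n :
  (0 < n)%N -> measurable D -> measurable01 h ->
  fine (mu D) = \sum_(k < n.+1) fine (mu (level_set D h n k)).
Proof.
move=> n0 mD h01; have := Rintegral_level_sets n0 mD h01 measurable01_cst1.
rewrite Rintegral_cst// mul1r => ->; apply: eq_bigr => k _.
by rewrite Rintegral_cst ?mul1r//; exact: measurable_level_set.
Qed.

Lemma level_sets_disjoint (V : finType) (D : V -> set T) (h : V -> T -> R) n :
  (0 < n)%N -> (forall x y, x != y -> D x `&` D y = set0) ->
  forall p q : V * 'I_n.+1, p != q ->
    level_set (D p.1) (h p.1) n p.2 `&` level_set (D q.1) (h q.1) n q.2 = set0.
Proof.
move=> n0 dD [x k] [y l] /= xkyl; have [exy|xy] := eqVneq x y; last first.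
  by apply/seteqP; split => // z [[Dx _] [Dy _]]; rewrite -(dD _ _ xy).
rewrite -exy in xkyl *; have kl : k != l by apply: contraNneq xkyl => ->.
apply/seteqP; split => // z [Ek El]; move/negP: kl; apply; apply/eqP/val_inj.
exact: (level_set_trivIset n0 I I (ex_intro _ z (conj Ek El))).
Qed.

End measurable01.

Section signed_Rintegral.
Context d (T : measurableType d) (R : realType).
Variables mp mn : {finite_measure set T -> \bar R}.
Implicit Types (D : set T) (h : T -> R).

Definition sm_Rintegral (D : set T) (h : T -> R) : R :=
  \int[mp]_(x in D) h x - \int[mn]_(x in D) h x.

Lemma norm_sm_Rintegral_le D h n : (0 < n)%N -> measurable D -> measurable01 h ->
  `|sm_Rintegral D h| <=
    \sum_(k < n.+1) `|fine (mp (level_set D h n k)) - fine (mn (level_set D h n k))|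
    + n%:R^-1 * (fine (mp D) + fine (mn D)).
Proof.
move=> n0 mD h01; rewrite /sm_Rintegral.
rewrite (Rintegral_level_sets mp n0 mD h01 h01) (Rintegral_level_sets mn n0 mD h01 h01).
rewrite (fine_measure_level_sets mp n0 mD h01) (fine_measure_level_sets mn n0 mD h01).
rewrite -sumrB -big_split /= mulr_sumr -big_split /=.
apply: le_trans (ler_norm_sum _ _ _) _; apply: ler_sum => k _.
have mE := measurable_level_set n k mD h01.
have n0' : 0 < n%:R :> R by rewrite ltr0n.
have pinched (mu : {finite_measure set T -> \bar R}) :
    k%:R / n%:R * fine (mu (level_set D h n k)) <=
      \int[mu]_(x in level_set D h n k) h x <=
    k%:R / n%:R * fine (mu (level_set D h n k)) + n%:R^-1 * fine (mu (level_set D h n k)).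
  rewrite -mulrDl -[X in _ + X]mul1r -mulrDl natr1.
  by apply: Rintegral01_bounds => // x /level_set_bounds.
apply: norm_sub_le_pinched (pinched mp) (pinched mn).
- by rewrite divr_ge0//= ler_pdivrMr// mul1r ler_nat -ltnS.
- exact/fine_ge0/measure_ge0.
- exact/fine_ge0/measure_ge0.
Qed.

Lemma sm_Rintegral01C D h : measurable D -> measurable01 h ->
  sm_Rintegral D (fun x => 1 - h x) = (fine (mp D) - fine (mn D)) - sm_Rintegral D h.
Proof.
by move=> mD h01; rewrite /sm_Rintegral !Rintegral01C//; ring.
Qed.

Lemma sm_Rintegral_one_on_zero_off A D f : measurable A -> measurable D ->
  A `&` D = set0 -> measurable01 f ->
  (forall x, A x -> f x = 1) -> (forall x, ~ (A `|` D) x -> f x = 0) ->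
  sm_Rintegral setT f = (fine (mp A) - fine (mn A)) + sm_Rintegral D f.
Proof.
move=> mA mD AD f01 f1 f0; rewrite /sm_Rintegral.
by rewrite !(Rintegral_one_on_zero_off _ mA mD AD f01 f1 f0) opprD addrACA.
Qed.

End signed_Rintegral.

Section borel_line.
Context {d : Order.disp_t} {K : orderTopologicalType d} (k0 : K).
Local Notation B := (borelK k0).

Lemma measurable_open (A : set K) : open A -> measurable (A : set B).
Proof. by move=> oA; apply: sub_sigma_algebra. Qed.

Lemma measurable_closed (A : set K) : closed A -> measurable (A : set B).
Proof.
by move=> cA; rewrite -(setCK A); apply: measurableC; apply: measurable_open; exact: closed_openC.
Qed.

Lemma measurable_oc (u t : K) : measurable (`]u, t] : set B).
Proof.
rewrite set_itv_splitI /=; apply: measurableI.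
- by apply: measurable_open; exact: rray_open.
- by apply: measurable_closed; exact: lray_closed.
Qed.

Lemma measurable_fun_continuous (R : realType) (f : K -> R) :
  continuous f -> measurable_fun setT (f : B -> R).
Proof.
move=> /continuousP cf; apply: (measurability _ (RGenOpens.measurableE R)).
move=> _ [_ [a [b ->] <-]]; apply: measurableI => //.
by apply: measurable_open; apply: cf; exact: interval_open.
Qed.

Lemma measurable_subsingleton (A : set K) : (forall x y, A x -> A y -> x = y) ->
  measurable (A : set B).
Proof.
move=> A1; have [[x Ax]|nA] := pselect (exists x, A x); last first.
  rewrite (_ : A = set0); first exact: measurable0.
  by apply/seteqP; split => // y Ay; apply: nA; exists y.
rewrite (_ : A = [set x]); last by apply/seteqP; split => [y Ay|y ->//]; exact: A1.
by apply: measurable_closed; rewrite -set_itv1; exact: itv_closed.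
Qed.

(* A point of J which is neither its least nor its greatest element lies in an
   open interval contained in J. *)
Lemma convex_subset_measurable (J : set K) : convex_subset J -> measurable (J : set B).
Proof.
move=> Jconv; pose lo := J `&` [set x | forall y, J y -> (x <= y)%O].
pose hi := J `&` [set x | forall y, J y -> (y <= x)%O].
have mlo : measurable (lo : set B).
  by apply: measurable_subsingleton => x y [Jx xJ] [Jy yJ]; apply: le_anti; rewrite xJ ?yJ.
have mhi : measurable (hi : set B).
  by apply: measurable_subsingleton => x y [Jx xJ] [Jy yJ]; apply: le_anti; rewrite xJ ?yJ.
rewrite (_ : J = J° `|` lo `|` hi); last first.
  apply/seteqP; split => [x Jx|x]; last by case=> [[/interior_subset|[]]|[]].
  have [[a Ja ax]|na] := pselect (exists2 a, J a & (a < x)%O); last first.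
    by left; right; split => // y Jy; rewrite leNgt; apply/negP => yx; apply: na; exists y.
  have [[b Jb xb]|nb] := pselect (exists2 b, J b & (x < b)%O); last first.
    by right; split => // y Jy; rewrite leNgt; apply/negP => xy; apply: nb; exists y.
  left; left; apply: (filterS _ (open_nbhs_nbhs (conj (itv_open a b) _))).
    move=> y; rewrite /= in_itv /= => /andP[ay yb].
    by apply: (Jconv a b Ja Jb (le_trans (ltW ax) (ltW xb))); rewrite /= in_itv /= !ltW.
  by rewrite /= in_itv /= ax xb.
apply: measurableU => //; apply: measurableU => //.
by apply: measurable_open; exact: open_interior.
Qed.

End borel_line.

Section total_variation.
Context {R : realType} {d : Order.disp_t} {K : orderTopologicalType d} (k0 : K).
Local Notation B := (borelK k0).
Variables mp mn : {finite_measure set B -> \bar R}.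
Local Notation mu := (sm_val mp mn).

Lemma sm_valU (A C : set B) : measurable A -> measurable C -> A `&` C = set0 ->
  mu (A `|` C) = mu A + mu C.
Proof.
move=> mA mC AC; rewrite /sm_val !measureU// !fineD ?fin_num_measure//.
by rewrite opprD addrACA.
Qed.

Lemma tot_var_ge_partition (T : finType) (A : set B) (P : T -> set B) :
  (forall x, measurable (P x)) -> (forall x y, x != y -> P x `&` P y = set0) ->
  \bigcup_x P x = A -> ((\sum_x `|mu (P x)|)%:E <= tot_var mp mn A)%E.
Proof.
move=> mP dP PA; apply: ereal_sup_ubound.
exists #|T|, (fun j => P (enum_val j)); split; [|split; [|split]] => //.
- by move=> j l jl; apply: dP; apply: contra jl => /eqP/enum_val_inj ->.
- rewrite -PA; apply/seteqP; split => x [j _ Px]; first by exists (enum_val j).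
  by exists (enum_rank j); rewrite // enum_rankK.
- by rewrite (big_enum_val (A := T)).
Qed.

Lemma tot_var_ge_disjoint (T : finType) (A : set B) (E : T -> set B) :
  measurable A -> (forall x, measurable (E x)) -> (forall x, E x `<=` A) ->
  (forall x y, x != y -> E x `&` E y = set0) ->
  ((\sum_x `|mu (E x)|)%:E <= tot_var mp mn A)%E.
Proof.
move=> mA mE EA dE; pose U := \bigcup_x E x.
pose P (o : option T) := if o is Some x then E x else A `\` U.
apply: le_trans (tot_var_ge_partition (P := P) _ _ _).
- by rewrite big_option lee_fin lerDr.
- case=> [x|] //=; apply: measurableD => //.
  by apply: fin_bigcup_measurable => //; exact: finite_finset.
- case=> [x|] [y|] //= xy.
  + by apply: dE; apply: contra xy => /eqP ->.
  + by apply/seteqP; split => // z [Ez [_]]; apply; exists x.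
  + by apply/seteqP; split => // z [[_ nU] Ez]; apply: nU; exists y.
- apply/seteqP; split => [z [[x|] _ /=]|z Az]; [exact: EA|by case|].
  have [[x _ Ez]|nU] := pselect (U z); first by exists (Some x).
  by exists None.
Qed.

Lemma sum_norm_sm_Rintegral_le_tot_var (T : finType) (A : set B) (D : T -> set B)
    (h : T -> B -> R) :
  measurable A -> (forall x, measurable (D x)) -> (forall x, measurable01 (h x)) ->
  (forall x, D x `<=` A) -> (forall x y, x != y -> D x `&` D y = set0) ->
  ((\sum_x `|sm_Rintegral mp mn (D x) (h x)|)%:E <= tot_var mp mn A)%E.
Proof.
move=> mA mD h01 DA dD; set S := \sum_x _.
pose C := \sum_x (fine (mp (D x)) + fine (mn (D x))).
have approx n : (0 < n)%N -> (S%:E <= tot_var mp mn A + (n%:R^-1 * C)%:E)%E.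
  move=> n0; pose E (p : T * 'I_n.+1) := level_set (D p.1) (h p.1) n p.2.
  have mE p : measurable (E p) by exact: measurable_level_set.
  apply: (@le_trans _ _ ((\sum_p `|mu (E p)|)%:E + (n%:R^-1 * C)%:E)%E); last first.
    apply: leeD2r; apply: tot_var_ge_disjoint => //; first by move=> p x [/DA].
    exact: level_sets_disjoint.
  rewrite -EFinD lee_fin /E.
  rewrite -(pair_bigA _ (fun x (k : 'I_n.+1) => `|mu (level_set (D x) (h x) n k)|)) /=.
  rewrite mulr_sumr -big_split /=.
  by apply: ler_sum => x _; exact: norm_sm_Rintegral_le.
apply/lee_addgt0Pr => e e0; pose n := (Num.truncn (C / e)).+1.
apply: le_trans (approx n isT) _; apply: leeD2l; rewrite lee_fin.
by rewrite mulrC ler_pdivrMr ?ltr0n// mulrC -ler_pdivrMr// ltW// truncnS_gt.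
Qed.

End total_variation.

Section cutoff.
Context {R : realType} {d : Order.disp_t} {K : orderTopologicalType d}.

Definition cutoff (t s : K) : K -> R := Urysohn `[s, +oo[ `]-oo, t].

Lemma cutoff_continuous t s : continuous (cutoff t s).
Proof. exact: Urysohn_continuous. Qed.

Lemma cutoff_ge0_le1 t s x : 0 <= cutoff t s x <= 1.
Proof.
have := @Urysohn_range K R `[s, +oo[ `]-oo, t] (cutoff t s x) (ex_intro2 _ _ x I erefl).
by rewrite /= in_itv.
Qed.

Lemma measurable01_cutoff (k0 : K) t s : measurable01 (cutoff t s : borelK k0 -> R).
Proof.
split=> [|x]; last exact: cutoff_ge0_le1.
by apply: measurable_fun_continuous; exact: cutoff_continuous.
Qed.

Hypothesis Kcl : compact_line K.

Lemma cutoff_separator (t s : K) : (t < s)%O -> uniform_separator `[s, +oo[ `]-oo, t].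
Proof.
move=> ts; have nK : normal_space K by apply: compact_normal => //; exact: order_hausdorff.
apply: ((normal_separatorP (R := R) (T := K)).1 nK); [exact: rray_closed|exact: lray_closed|].
apply/seteqP; split => // x [] /=; rewrite !in_itv /= andbT => sx xt.
by have := lt_le_trans ts sx; rewrite ltNge xt.
Qed.

Lemma cutoff_left t s x : (t < s)%O -> (x <= t)%O -> cutoff t s x = 1.
Proof.
move=> ts xt; apply: (Urysohn_sub1 (cutoff_separator ts)).
by exists x => //=; rewrite in_itv /= xt.
Qed.

Lemma cutoff_right t s x : (t < s)%O -> (s <= x)%O -> cutoff t s x = 0.
Proof.
move=> ts sx; apply: (Urysohn_sub0 (cutoff_separator ts)).
by exists x => //=; rewrite in_itv /= sx.
Qed.

End cutoff.

Record piece (K R : Type) :=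
  Piece { piece_set : set K; piece_weight : K -> R; piece_test : K -> R }.

Section pieces.
Context {R : realType} {d : Order.disp_t} {K : orderTopologicalType d} (k0 : K).
Local Notation B := (borelK k0).

Definition piece_at (t : K) (p : piece K R) :=
  [/\ measurable (piece_set p : set B), measurable01 (piece_weight p : B -> R),
      continuous (piece_test p) &
      forall mp mn : {finite_measure set B -> \bar R},
        `|F_of_meas mp mn t| <= `|sm_integral mp mn (piece_test p)|
                                + `|sm_Rintegral mp mn (piece_set p) (piece_weight p)|].

(* With f the test function, h the weight and D the set of the piece:
   F(t) = int f dmu - int_D h dmu for right pieces and
   F(t) = int f dmu + int_D h dmu for left ones. *)
Definition right_piece (t s : K) : piece K R := Piece `]t, s[ (cutoff t s) (cutoff t s).
Definition right_piece_inf (t : K) : piece K R := Piece `]t, +oo[ (fun=> 1) (fun=> 1).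
Definition left_piece (u t : K) : piece K R :=
  Piece `]u, t] (fun x => 1 - cutoff u t x) (cutoff u t).
Definition left_piece_inf (t : K) : piece K R := Piece `]-oo, t] (fun=> 1) (fun=> 0).

Lemma right_piece_inf_at t : piece_at t (right_piece_inf t).
Proof.
split=> [|||mp mn]; first (by apply: measurable_open; exact: rray_open);
  [exact: measurable01_cst1|by move=> x; exact: cvg_cst|].
rewrite [sm_integral _ _ _](@sm_Rintegral_one_on_zero_off _ B R mp mn `]-oo, t] `]t, +oo[).
- by rewrite /=; exact: norm_le_normD.
- by apply: measurable_closed; exact: lray_closed.
- by apply: measurable_open; exact: rray_open.
- by apply: lray_disjoint => x; rewrite /= in_itv /= andbT.
- exact: measurable01_cst1.
- by [].
- move=> x; apply: contra_notP => _ /=; rewrite !in_itv /= andbT.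
  by case: leP; [left|right].
Qed.

Lemma left_piece_inf_at t : piece_at t (left_piece_inf t).
Proof.
have mA : measurable (`]-oo, t] : set B) by apply: measurable_closed; exact: lray_closed.
split=> [//|||mp mn]; [exact: measurable01_cst1|by move=> x; exact: cvg_cst|].
by rewrite /sm_integral /sm_Rintegral /= !integral0 subrr normr0 add0r !Rintegral_cst// !mul1r.
Qed.

Hypothesis Kcl : compact_line K.

Lemma right_piece_at t s : (t < s)%O -> piece_at t (right_piece t s).
Proof.
move=> ts; split=> [|||mp mn]; first (by apply: measurable_open; exact: itv_open);
  [exact: measurable01_cutoff|exact: cutoff_continuous|].
rewrite [sm_integral _ _ _](@sm_Rintegral_one_on_zero_off _ B R mp mn `]-oo, t] `]t, s[).
- by rewrite /=; exact: norm_le_normD.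
- by apply: measurable_closed; exact: lray_closed.
- by apply: measurable_open; exact: itv_open.
- by apply: lray_disjoint => x; rewrite /= in_itv /= => /andP[].
- exact: measurable01_cutoff.
- by move=> x; rewrite /= in_itv /=; exact: cutoff_left.
- move=> x nx; apply: cutoff_right => //; rewrite leNgt; apply/negP => xs; apply: nx.
  by rewrite /= !in_itv /= xs andbT; case: leP; [left|right].
Qed.

Lemma left_piece_at u t : (u < t)%O -> piece_at t (left_piece u t).
Proof.
move=> ut; split=> [|||mp mn]; first exact: measurable_oc;
  [exact/measurable01C/measurable01_cutoff|exact: cutoff_continuous|].
have mA : measurable (`]-oo, u] : set B) by apply: measurable_closed; exact: lray_closed.
have mD : measurable (`]u, t] : set B) by exact: measurable_oc.
have f01 := measurable01_cutoff (R := R) k0 u t.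
have AD : `]-oo, u] `&` `]u, t] = set0.
  by apply: lray_disjoint => x; rewrite /= in_itv /= => /andP[].
have -> : F_of_meas mp mn t = sm_val mp mn `]-oo, u] + sm_val mp mn `]u, t].
  by rewrite /F_of_meas (lray_split (ltW ut)) sm_valU.
rewrite [sm_integral _ _ _](@sm_Rintegral_one_on_zero_off _ B R mp mn `]-oo, u] `]u, t]) //.
- rewrite /= sm_Rintegral01C// /sm_val.
  set a := fine _ - fine _; set b := fine _ - fine _; set c := sm_Rintegral _ _ _ _.
  by rewrite (_ : a + b = (a + c) + (b - c)); [exact: ler_normD|ring].
- by move=> x; rewrite /= in_itv /=; exact: cutoff_left.
- move=> x nx; apply: cutoff_right => //; apply: ltW; rewrite ltNge; apply/negP => xt.
  by apply: nx; have [xu|ux] := leP x u; [left|right]; rewrite /= ?in_itv /= ?xu ?ux ?xt.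
Qed.

End pieces.

Section mod_c0.
Context {R : realType} {I : Type}.

Lemma c0_lim0_sum_norm (T : finType) (g : T -> I -> R) :
  (forall j, c0_lim0 (g j)) -> c0_lim0 (fun i => \sum_j `|g j i|).
Proof.
move=> g0 eps e0; pose c := eps / (#|T|%:R + 1).
have N0 : 0 < #|T|%:R + 1 :> R by rewrite ltr_wpDl ?ler0n.
apply: (@sub_finite_set _ _ (\bigcup_(j in [set: T]) [set i | c <= `|g j i|])); last first.
  apply: bigcup_finite; first exact: finite_finset.
  by move=> j _; apply: g0; rewrite divr_gt0.
move=> i /=; rewrite ger0_norm ?sumr_ge0// => ei; apply: contrapT => nc.
have : \sum_j `|g j i| <= \sum_(j : T) c.
  by apply: ler_sum => j _; rewrite ltW// ltNge; apply/negP => cj; apply: nc; exists j.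
have : #|T|%:R * c < eps by rewrite /c mulrA ltr_pdivrMr// mulrDr mulr1 mulrC ltrDl.
by rewrite sumr_const -mulr_natl; lra.
Qed.

Lemma le_mod_c0I_le_add (x y : I -> R) (V : I -> \bar R) : c0_lim0 y ->
  (forall i, ((x i)%:E <= V i + (y i)%:E)%E) -> le_mod_c0I x V.
Proof.
move=> y0 xVy eps e0; apply: sub_finite_set (y0 eps e0) => i /=.
move: (xVy i); case: (V i) => [v| |] /=.
- by rewrite -!EFinD !lee_fin => ? ?; rewrite (le_trans _ (ler_norm _))//; lra.
- by rewrite !addye// leNgt ltey.
- by rewrite addNye leNgt ltNye.
Qed.

Lemma le_mod_c0I_scale (c : R) (x : I -> R) (V : I -> \bar R) : 0 < c ->
  le_mod_c0I (fun i => c * x i) V -> le_mod_c0I x (fun i => (c^-1%:E * V i)%E).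
Proof.
move=> c0 cxV eps e0; apply: sub_finite_set (cxV _ (mulr_gt0 c0 e0)) => i /=.
case: (V i) => [v| |] /=.
- rewrite -EFinM -!EFinD !lee_fin => h.
  by rewrite -(ler_pM2l c0) mulrDr mulrA mulfV ?gt_eqF// mul1r in h.
- by rewrite mulry gtr0_sg ?invr_gt0// mul1e addye// leNgt ltey.
- by rewrite addNye leNye.
Qed.

End mod_c0.

Section assembly.
Context {R : realType} {d : Order.disp_t} {K : orderTopologicalType d} (k0 : K).
Local Notation B := (borelK k0).
Variables (I : Type) (mp mn : I -> {finite_measure set B -> \bar R}).
Hypothesis wnull : forall f : K -> R, continuous f ->
  c0_lim0 (fun i => sm_integral (mp i) (mn i) f).

Lemma le_mod_c0I_pieces (J : set K) (T : finType) (tau : T -> K) (P : T -> piece K R)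
    (x : I -> R) :
  measurable (J : set B) -> (forall y, piece_at k0 (tau y) (P y)) ->
  (forall y, piece_set (P y) `<=` J) ->
  (forall y z, y != z -> piece_set (P y) `&` piece_set (P z) = set0) ->
  (forall i, x i <= \sum_y `|F_of_meas (mp i) (mn i) (tau y)|) ->
  le_mod_c0I x (fun i => tot_var (mp i) (mn i) J).
Proof.
move=> mJ Pat PJ Pdisj xle.
apply: (le_mod_c0I_le_add (y := fun i => \sum_y `|sm_integral (mp i) (mn i) (piece_test (P y))|)).
  by apply: c0_lim0_sum_norm => y; apply: wnull; case: (Pat y).
move=> i; rewrite addeC.
have mP y : measurable (piece_set (P y) : set B) by case: (Pat y).
have P01 y : measurable01 (piece_weight (P y) : B -> R) by case: (Pat y).
apply: le_trans (leeD2l _ (sum_norm_sm_Rintegral_le_tot_var (mp i) (mn i) mJ mP P01 PJ Pdisj)).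
rewrite -EFinD lee_fin -big_split /= (le_trans (xle i))//.
by apply: ler_sum => y _; case: (Pat y) => _ _ _; apply.
Qed.

End assembly.

Section boundary_pieces.
Context {R : realType} {d : Order.disp_t} {K : orderTopologicalType d} (k0 : K).
Hypothesis Kcl : compact_line K.
Variable J : set K.

Lemma convex_left_piece a t : convex_subset J -> J a -> J t -> (a < t)%O ->
  exists p : piece K R, piece_at k0 t p /\ piece_set p `<=` J `&` `]-oo, t].
Proof.
move=> Jconv Ja Jt at_; exists (left_piece a t); split; first exact: left_piece_at.
move=> x /=; rewrite in_itv /= => /andP[ax xt]; split; last by rewrite /= in_itv.
by apply: (Jconv a t) => //; [exact: ltW|rewrite /= in_itv /= (ltW ax) xt].
Qed.

Lemma convex_right_piece t b : convex_subset J -> J t -> J b -> (t < b)%O ->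
  exists p : piece K R, piece_at k0 t p /\ piece_set p `<=` J `&` `]t, +oo[.
Proof.
move=> Jconv Jt Jb tb; exists (right_piece t b); split; first exact: right_piece_at.
move=> x /=; rewrite in_itv /= => /andP[tx xb]; split; last by rewrite /= in_itv /= tx.
by apply: (Jconv t b) => //; [exact: ltW|rewrite /= in_itv /= !ltW].
Qed.

Lemma open_itv_nbhs t : open J -> J t ->
  exists2 i : interval K, itv_open_ends i /\ t \in i & [set` i] `<=` J.
Proof.
move=> oJ Jt; have : nbhs t J by apply: open_nbhs_nbhs.
by rewrite itv_nbhsE => -[i [oi ti] iJ]; exists i.
Qed.

Lemma open_left_piece t : open J -> J t ->
  exists p : piece K R, piece_at k0 t p /\ piece_set p `<=` J `&` `]-oo, t].
Proof.
move=> oJ Jt; have [[l r] [oi ti] iJ] := open_itv_nbhs oJ Jt.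
move: ti; rewrite itv_boundlr => /andP[lt tr].
have sub x : (x <= t)%O -> (l <= BLeft x)%O -> J x.
  move=> xt lx; apply: iJ; rewrite /= itv_boundlr lx /=.
  by apply: le_trans tr; rewrite bnd_simp.
case: l oi lt sub iJ => [[] a|[]] oi lt sub iJ.
- by move: oi; case: r {iJ tr} => [[] ?|[]].
- exists (left_piece a t); split; first by apply: left_piece_at; move: lt; rewrite bnd_simp.
  move=> x /=; rewrite in_itv /= => /andP[ax xt]; split; last by rewrite /= in_itv.
  by apply: sub => //; rewrite bnd_simp.
- exists (left_piece_inf t); split; first exact: left_piece_inf_at.
  by move=> x /=; rewrite in_itv /= => xt; split; [exact: sub|rewrite /= ?in_itv].
- by move: lt; rewrite bnd_simp.
Qed.

Lemma open_right_piece t : open J -> J t ->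
  exists p : piece K R, piece_at k0 t p /\ piece_set p `<=` J `&` `]t, +oo[.
Proof.
move=> oJ Jt; have [[l r] [oi ti] iJ] := open_itv_nbhs oJ Jt.
move: ti; rewrite itv_boundlr => /andP[lt tr].
have sub x : (t <= x)%O -> (BRight x <= r)%O -> J x.
  move=> tx xr; apply: iJ; rewrite /= itv_boundlr xr andbT.
  by apply: le_trans lt _; rewrite bnd_simp.
case: r oi tr sub iJ => [[] b|[]] oi tr sub iJ.
- exists (right_piece t b); split; first by apply: right_piece_at; move: tr; rewrite bnd_simp.
  move=> x /=; rewrite in_itv /= => /andP[tx xb]; split; last by rewrite /= in_itv /= tx.
  by apply: sub; [exact: ltW|rewrite bnd_simp].
- by move: oi; case: l {iJ lt} => [[] ?|[]].
- by move: tr; rewrite bnd_simp.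
- exists (right_piece_inf t); split; first exact: right_piece_inf_at.
  move=> x /=; rewrite in_itv /= andbT => tx; split => //.
  by apply: sub => //; exact: ltW.
Qed.

End boundary_pieces.

Section sorted_points.
Context {d : Order.disp_t} {K : orderType d} (k0 : K).

Definition sorted_point (S : seq K) (k : nat) : K := nth k0 (sort <=%O S) k.

Lemma sorted_point_lt (S : seq K) i j : uniq S -> (i < j)%N -> (j < size S)%N ->
  (sorted_point S i < sorted_point S j)%O.
Proof.
move=> Su ij jS; apply: (sorted_ltn_nth lt_trans); rewrite ?sort_lt_sorted//.
- by rewrite inE size_sort (ltn_trans ij).
- by rewrite inE size_sort.
Qed.

Lemma sorted_point_mem (S : seq K) k : (k < size S)%N -> sorted_point S k \in S.
Proof. by move=> kS; rewrite -(mem_sort <=%O) mem_nth// size_sort. Qed.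

Lemma sum_sorted_points (R : numDomainType) (S : seq K) (G : K -> R) :
  \sum_(t <- S) G t = \sum_(k < size S) G (sorted_point S k).
Proof. by rewrite -(perm_big _ (permEl (perm_sort <=%O S))) (big_nth k0) size_sort big_mkord. Qed.

(* Nothing lies strictly between u and v, so ]a, v[ and ]u, b] are disjoint. *)
Definition cut_between (a b u v : K) :=
  [/\ (a <= u)%O, (u < b)%O, (a < v)%O, (v <= b)%O & forall x, (x < v)%O -> (x <= u)%O].

Lemma exists_cut (a b : K) : (a < b)%O -> exists u v, cut_between a b u v.
Proof.
move=> ab; have [[c /andP[ac cb]]|nc] := pselect (exists c, (a < c < b)%O).
  by exists c, c; split => //; [exact: ltW ac|exact: ltW cb|move=> x /ltW].
exists a, b; split => // x xb; rewrite leNgt; apply/negP => ax.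
by apply: nc; exists x; rewrite ax xb.
Qed.

Lemma exists_cuts (m : nat) (s : nat -> K) :
  (forall i j, (i < j)%N -> (j < m)%N -> (s i < s j)%O) ->
  exists u v : nat -> K,
    forall k, (k.+1 < m)%N -> cut_between (s k) (s k.+1) (u k) (v k).
Proof.
move=> s_lt; suff /choice[uv Huv] : forall k, exists uv : K * K,
    (k.+1 < m)%N -> cut_between (s k) (s k.+1) uv.1 uv.2.
  by exists (fun k => (uv k).1), (fun k => (uv k).2).
move=> k; have [km|km] := boolP (k.+1 < m)%N; last first.
  by exists (k0, k0) => km'; case/negP: km.
by have [u [v Huv]] := exists_cut (s_lt k k.+1 (ltnSn k) km); exists (u, v).
Qed.

End sorted_points.

Section cells.
Context {R : realType} {d : Order.disp_t} {K : orderTopologicalType d} (k0 : K).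
Hypothesis Kcl : compact_line K.
Variables (J : set K) (m : nat) (s u v : nat -> K).
Hypothesis Jconv : convex_subset J.
Hypothesis s_lt : forall i j, (i < j)%N -> (j < m)%N -> (s i < s j)%O.
Hypothesis sJ : forall k, (k < m)%N -> J (s k).
Hypothesis cuts : forall k, (k.+1 < m)%N -> cut_between (s k) (s k.+1) (u k) (v k).

(* The pieces attached to s k lie in cell k, between the cuts on either side of
   s k, so that pieces attached to distinct points are disjoint. *)
Definition cell (k : nat) : set K :=
  [set x | ((0 < k)%N -> (u k.-1 < x)%O) /\ ((k.+1 < m)%N -> (x <= u k)%O)].

Definition side (t : K) (b : bool) : set K := if b then `]-oo, t]%classic else `]t, +oo[%classic.

Definition piece_in (k : nat) (b : bool) (p : piece K R) :=
  piece_at k0 (s k) p /\ piece_set p `<=` J `&` cell k `&` side (s k) b.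

Lemma point_le i j : (i <= j)%N -> (j < m)%N -> (s i <= s j)%O.
Proof. by rewrite leq_eqVlt => /orP[/eqP -> //|ij] jm; exact/ltW/s_lt. Qed.

Lemma cut_le i j : (i <= j)%N -> (j.+1 < m)%N -> (u i <= u j)%O.
Proof.
rewrite leq_eqVlt => /orP[/eqP -> //|ij] jm.
have [_ ui _ _ _] := cuts (leq_ltn_trans ij (ltnW jm)); have [sj _ _ _ _] := cuts jm.
exact: le_trans (ltW ui) (le_trans (point_le ij (ltnW jm)) sj).
Qed.

Lemma cell_disjoint k l : (k < l)%N -> (l < m)%N -> cell k `&` cell l = set0.
Proof.
move=> kl lm; apply/seteqP; split => // x [[_ xk] [lx _]].
have l0 : (0 < l)%N by exact: leq_ltn_trans kl.
have kl' : (k <= l.-1)%N by rewrite -ltnS prednK.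
have lm' : (l.-1.+1 < m)%N by rewrite prednK.
have := le_lt_trans (cut_le kl' lm') (lx l0).
by rewrite ltNge xk// (leq_ltn_trans kl lm).
Qed.

Lemma piece_in_disjoint (T : finType) (idx : T -> 'I_m * bool) (P : T -> piece K R) :
  injective idx -> (forall y, piece_in (idx y).1 (idx y).2 (P y)) ->
  forall y z, y != z -> piece_set (P y) `&` piece_set (P z) = set0.
Proof.
move=> idx_inj PP y z yz; apply/seteqP; split => // x [].
move=> /(PP y).2[[_ cy] sy] /(PP z).2[[_ cz] sz].
have : idx y != idx z by apply: contra yz => /eqP/idx_inj ->.
case: (idx y) (idx z) cy sy cz sz => [k b] [l c] /= cy sy cz sz kblc.
have [kl|lk|ekl] := ltngtP k l.
- by have /seteqP[/(_ x (conj cy cz))] := cell_disjoint kl (ltn_ord l).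
- by have /seteqP[/(_ x (conj cz cy))] := cell_disjoint lk (ltn_ord k).
have {kblc} : b != c.
  by apply: contra kblc => /eqP ->; rewrite (_ : k = l)//; exact: val_inj.
rewrite ekl in sy; case: b c sy sz => [] [] //= + + _; rewrite !in_itv /= ?andbT.
- by move=> xs sx; have := le_lt_trans xs sx; rewrite ltxx.
- by move=> sx xs; have := le_lt_trans xs sx; rewrite ltxx.
Qed.

Lemma inner_left_piece k : (0 < k)%N -> (k < m)%N ->
  piece_in k true (left_piece (u k.-1) (s k)).
Proof.
move=> k_gt0 km; have k1m : (k.-1.+1 < m)%N by rewrite prednK.
have [su us _ _ _] := cuts k1m; rewrite prednK// in us.
split; first exact: left_piece_at.
move=> x /=; rewrite in_itv /= => /andP[ux xs]; split => //.
split; last by split => // k1m'; have [sk _ _ _ _] := cuts k1m'; exact: le_trans sk.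
apply: (Jconv (sJ (ltnW k1m)) (sJ km)); first by rewrite point_le// leq_pred.
by rewrite /= in_itv /= xs andbT (le_trans su)// ltW.
Qed.

Lemma inner_right_piece k : (k.+1 < m)%N -> piece_in k false (right_piece (s k) (v k)).
Proof.
move=> k1m; have [_ _ sv vs vu] := cuts k1m.
split; first exact: right_piece_at.
move=> x /=; rewrite in_itv /= => /andP[sx xv]; split; last by rewrite in_itv /= sx.
split.
  apply: (Jconv (sJ (ltnW k1m)) (sJ k1m)); first exact/ltW/s_lt.
  by rewrite /= in_itv /= (ltW sx) (le_trans (ltW xv)).
split=> [k_gt0|_]; last exact: vu.
have k1m' : (k.-1.+1 < m)%N by rewrite prednK// ltnW.
by have [_ us _ _ _] := cuts k1m'; rewrite prednK// in us; exact: lt_trans sx.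
Qed.

Lemma first_left_piece p : (0 < m)%N -> piece_at k0 (s 0) p ->
  piece_set p `<=` J `&` `]-oo, s 0] -> piece_in 0 true p.
Proof.
move=> m0 pat pJ; split => // x /pJ[Jx]; rewrite /= in_itv /= => xs.
do 3 split => //; move=> m1; have [su _ _ _ _] := cuts m1; exact: le_trans su.
Qed.

Lemma last_right_piece p : (0 < m)%N -> piece_at k0 (s m.-1) p ->
  piece_set p `<=` J `&` `]s m.-1, +oo[ -> piece_in m.-1 false p.
Proof.
move=> m0 pat pJ; split => // x /pJ[Jx]; rewrite /= in_itv /= andbT => sx.
do 2 split => //; split => [m1|]; last by rewrite prednK// ltnn.
have m1' : (m.-1.-1.+1 < m)%N by rewrite prednK// ltn_predL.
by have [_ us _ _ _] := cuts m1'; rewrite prednK// in us; exact: lt_trans sx.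
Qed.

Lemma one_sided_pieces : (exists t t', J t /\ J t' /\ t <> t') ->
  exists (b : 'I_m -> bool) (P : 'I_m -> piece K R),
    forall k : 'I_m, piece_in k (b k) (P k).
Proof.
move=> [t1 [t2 [Jt1 [Jt2 t12]]]].
suff /choice[f Hf] : forall k : 'I_m, exists bp : bool * piece K R, piece_in k bp.1 bp.2.
  by exists (fun k => (f k).1), (fun k => (f k).2).
move=> [k /= km].
have [k1m|klast] := ltnP k.+1 m.
  by exists (false, right_piece (s k) (v k)); exact: inner_right_piece.
have ek : k = m.-1 by lia.
have [[b Jb kb]|nb] := pselect (exists2 b, J b & (s k < b)%O).
  have [p [pat pJ]] := convex_right_piece (R := R) k0 Kcl Jconv (sJ km) Jb kb.
  by exists (false, p); rewrite ek in pat pJ *; apply: last_right_piece => //; lia.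
have [k_eq0|k_gt0] := posnP k; last first.
  by exists (true, left_piece (u k.-1) (s k)); exact: inner_left_piece.
rewrite {}k_eq0 in km nb *.
have le_s0 y : J y -> (y <= s 0)%O.
  by move=> Jy; rewrite leNgt; apply/negP => sy; apply: nb; exists y.
have [a Ja a0] : exists2 a, J a & (a < s 0)%O.
  have [e1|n1] := eqVneq t1 (s 0); last by exists t1; rewrite // lt_neqAle n1 le_s0.
  exists t2; rewrite // lt_neqAle le_s0// andbT.
  by apply/eqP => e2; apply: t12; rewrite e1 e2.
have [p [pat pJ]] := convex_left_piece (R := R) k0 Kcl Jconv Ja (sJ km) a0.
by exists (true, p); exact: first_left_piece.
Qed.

Lemma two_sided_pieces : open J ->
  exists P : 'I_m * bool -> piece K R, forall p : 'I_m * bool, piece_in p.1 p.2 (P p).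
Proof.
move=> oJ; suff /choice[P HP] : forall p : 'I_m * bool, exists q, piece_in p.1 p.2 q.
  by exists P.
move=> [[k km] []] /=.
- case: k km => [|k] km; last first.
    by exists (left_piece (u k) (s k.+1)); exact: inner_left_piece.
  have [p [pat pJ]] := open_left_piece (R := R) k0 Kcl oJ (sJ km).
  by exists p; exact: first_left_piece.
- have [k1m|klast] := ltnP k.+1 m.
    by exists (right_piece (s k) (v k)); exact: inner_right_piece.
  have ek : k = m.-1 by lia.
  have [p [pat pJ]] := open_right_piece (R := R) k0 Kcl oJ (sJ km).
  by exists p; rewrite ek in pat pJ *; apply: last_right_piece => //; lia.
Qed.

Lemma le_mod_c0I_piece_in (I : Type) (mp mn : I -> {finite_measure set borelK k0 -> \bar R})
    (T : finType) (idx : T -> 'I_m * bool) (P : T -> piece K R) (x : I -> R) :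
  (forall f : K -> R, continuous f -> c0_lim0 (fun i => sm_integral (mp i) (mn i) f)) ->
  injective idx -> (forall y, piece_in (idx y).1 (idx y).2 (P y)) ->
  (forall i, x i <= \sum_y `|F_of_meas (mp i) (mn i) (s (idx y).1)|) ->
  le_mod_c0I x (fun i => tot_var (mp i) (mn i) J).
Proof.
move=> wnull idx_inj PP xle.
have PJ y : piece_set (P y) `<=` J by move=> z /(PP y).2[[]].
apply: (le_mod_c0I_pieces wnull (tau := fun y => s (idx y).1) (P := P) _ _ PJ) => //.
- exact: convex_subset_measurable.
- by move=> y; case: (PP y).
- exact: piece_in_disjoint idx_inj PP.
Qed.

End cells.

Unset Implicit Arguments.

Theorem proposition2p14 (R : realType) (d : Order.disp_t)
  (K : orderTopologicalType d) (k0 : K) (Kcl : compact_line K)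
  (I : Type)
  (mp mn : I -> {finite_measure set (borelK k0) -> \bar R})
  (mp_reg : forall i, radon_regular (mp i))
  (mn_reg : forall i, radon_regular (mn i))
  (wnull : forall f : K -> R, continuous f ->
     c0_lim0 (fun i => sm_integral (mp i) (mn i) f))
  (J : set K) (Jconv : convex_subset J)
  (S : seq K) (Suniq : uniq S) (SJ : forall t, t \in S -> J t) :
  ((exists t s, J t /\ J s /\ t <> s) ->
     le_mod_c0I (fun i => \sum_(t <- S) `|F_of_meas (mp i) (mn i) t|)
               (fun i => tot_var (mp i) (mn i) J)) /\
  (open J ->
     le_mod_c0I (fun i => \sum_(t <- S) `|F_of_meas (mp i) (mn i) t|)
               (fun i => (2^-1%:E * tot_var (mp i) (mn i) J)%E)).
Proof.
pose s := sorted_point k0 S.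
have s_lt i j : (i < j)%N -> (j < size S)%N -> (s i < s j)%O := sorted_point_lt k0 Suniq.
have sJ k : (k < size S)%N -> J (s k) by move=> kS; apply: SJ; exact: sorted_point_mem.
have [u [v cuts]] := exists_cuts k0 s_lt.
have sumS i : \sum_(t <- S) `|F_of_meas (mp i) (mn i) t| =
    \sum_(k < size S) `|F_of_meas (mp i) (mn i) (s k)| := sum_sorted_points k0 S _.
split=> [J2|oJ].
- have [b [P HP]] := one_sided_pieces (R := R) k0 Kcl Jconv s_lt sJ cuts J2.
  apply: (le_mod_c0I_piece_in Jconv s_lt cuts (idx := fun k => (k, b k)) wnull _ HP).
  + by move=> k l /(congr1 fst).
  + by move=> i; rewrite sumS.
- have [P HP] := two_sided_pieces (R := R) k0 Kcl Jconv s_lt sJ cuts oJ.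
  apply: le_mod_c0I_scale (ltr0Sn _ 1) _.
  apply: (le_mod_c0I_piece_in Jconv s_lt cuts (idx := id) wnull _ HP) => // i.
  by rewrite sumS (sum_pair_bool (fun k : 'I_(size S) => `|F_of_meas (mp i) (mn i) (s k)|)).
Qed.
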